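(* Let $f:\Gamma\to\Gamma$ be an irreducible, expanding graph map which is a homotopy equivalence, with a fold decomposition consisting of $m$ total folds, and suppose $f$ has $p$ stacks. Then $$m\le\sum_{e\in\mathcal{E}\Gamma}\big(|f(e)|-1\big).$$ Moreover, if $f$ is periodic on the vertices of $\Gamma$ (i.e. $f_V$ is a bijection of $\mathcal{V}\Gamma$), then $p\le m$.
   Context: A graph $\Gamma$ is a finite 1-dimensional CW complex (multiple edges and loops allowed) with a chosen orientation on each edge; $\mathcal{V}\Gamma$, $\mathcal{E}\Gamma$ (positively oriented edges), $\mathcal{E}^\pm\Gamma$ (both orientations); $\bar e$ is the reverse, $\iota,\tau$ the endpoints. An edge path is a nonempty concatenation $u=e_1\cdots e_k$ with $\tau(e_i)=\iota(e_{i+1})$; $|u|=k$ counts edges without cancelling backtracks; $u$ traverses $e$ if $e$ or $\bar e$ occurs in it. A graph map $f:\Gamma_1\to\Gamma_2$ consists of a vertex map $f_V$ and an edge path $f(e)$ for each $e\in\mathcal{E}^\pm\Gamma_1$ with $\iota(f(e))=f_V(\iota(e))$, $f(\bar e)=\overline{f(e)}$; it extends to paths by concatenation; it is regarded as a continuous map. A graph isomorphism is a graph map with $f_V$ bijective restricting to a bijection from $\mathcal{E}^\pm\Gamma_1$ onto the single edges of $\Gamma_2$. $T(f)$ has $(i,j)$ entry the number of times $f(e_i)$ traverses $e_j$; $f$ is irreducible if $T(f)$ is irreducible and every vertex has valence $\ge3$; $f$ is expanding if $|f^n(e)|\to\infty$ for every edge. Folds: for distinct oriented edges $e_0,e_1$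 with $e_1\ne\bar e_0$ and $\iota(e_0)=\iota(e_1)$: the proper full fold of $e_1$ over $e_0$ subdivides $e_1=e_1''e_1'$ and identifies $e_1''$ with $e_0$ (map $e_1\mapsto e_0e_1'$, others fixed); the complete fold identifies $e_0$ with $e_1$ entirely; the partial fold subdivides $e_0=e_0'e_0''$, $e_1=e_1''e_1'$ and identifies $e_1''$ with $e_0'$ (map $e_0\mapsto e_0'e_0''$, $e_1\mapsto e_0'e_1'$). A fold decomposition with $m$ folds is $f=h\circ f_m\circ\cdots\circ f_1$ with $\Gamma_1=\Gamma$, $f_i:\Gamma_i\to\Gamma_{i+1}$ folds and $h:\Gamma_{m+1}\to\Gamma$ a graph isomorphism. Stacks: $e\in\mathcal{E}\Gamma$ is mixing if $|f(e)|>1$; surplus if non-mixing and $f(e)\in\{f(u),\overline{f(u)}\}$ for some edge $u\notin\{e,\bar e\}$. Stacks are the classes of the equivalence relation on $\mathcal{E}\Gamma$ (unoriented edges) generated by $e\sim f(e)$ whenever $e$ is non-mixing and non-surplus (then $f(e)$ is a single edge). *)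

From mathcomp Require Import all_boot all_order all_algebra.
Set Implicit Arguments. Unset Strict Implicit. Unset Printing Implicit Defensive.
Import Order.TTheory GRing.Theory Num.Theory.

(* Vertices are 0..nV-1, positively oriented edges are 0..nE-1,
   edge x goes from ini x to ter x. *)
Record graph := Graph { nV : nat; nE : nat; ini : nat -> nat; ter : nat -> nat }.

Definition wf_graph (G : graph) : Prop :=
  forall x, x < nE G -> (ini G x < nV G) && (ter G x < nV G).

(* oriented edge: (x, true) = x, (x, false) = reverse of x *)
Definition oedge := (nat * bool)%type.
Definition orev (a : oedge) : oedge := (a.1, ~~ a.2).
Definition oini G (a : oedge) := if a.2 then ini G a.1 else ter G a.1.
Definition oter G (a : oedge) := if a.2 then ter G a.1 else ini G a.1.
Definition ovalid G (a : oedge) : bool := a.1 < nE G.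
Definition revp (s : seq oedge) : seq oedge := map orev (rev s).

Definition is_epath G (s : seq oedge) : bool :=
  if s is a :: s' then all (ovalid G) s && path (fun x y => oter G x == oini G y) a s'
  else false.

Definition vpath G (s : seq oedge) (u v : nat) : bool :=
  if s is a :: s' then [&& is_epath G s, oini G a == u & oter G (last a s') == v]
  else u == v.

Record gmap := GMap { mV : nat -> nat; mE : oedge -> seq oedge }.

Definition is_cmap G1 G2 (f : gmap) : Prop :=
  [/\ forall v, v < nV G1 -> mV f v < nV G2,
      forall a, ovalid G1 a -> vpath G2 (mE f a) (mV f (oini G1 a)) (mV f (oter G1 a))
    & forall x, x < nE G1 -> mE f (x, false) = revp (mE f (x, true))].

Definition is_gmap G1 G2 (f : gmap) : Prop :=
  is_cmap G1 G2 f /\ forall a, ovalid G1 a -> mE f a != [::].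

Definition mapP (f : gmap) (s : seq oedge) : seq oedge := flatten (map (mE f) s).
Definition gcomp (g f : gmap) : gmap := GMap (mV g \o mV f) (fun a => mapP g (mE f a)).
Definition gid : gmap := GMap id (fun a => [:: a]).

Definition geq G (f g : gmap) : Prop :=
  (forall v, v < nV G -> mV f v = mV g v) /\ forall a, ovalid G a -> mE f a = mE g a.

Definition bij_on (T1 T2 : eqType) (A : pred T1) (B : pred T2) (phi : T1 -> T2) : Prop :=
  [/\ forall x, A x -> B (phi x), {in A &, injective phi}
    & forall y, B y -> exists2 x, A x & phi x = y].

Definition is_giso G1 G2 (h : gmap) : Prop :=
  [/\ is_gmap G1 G2 h,
      bij_on [pred v | v < nV G1] [pred v | v < nV G2] (mV h),
      forall a, ovalid G1 a -> size (mE h a) = 1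
    & bij_on (ovalid G1) (ovalid G2) (fun a => head a (mE h a))].

Definition rpush (a : oedge) (r : seq oedge) : seq oedge :=
  if r is b :: r' then (if b == orev a then r' else a :: r) else [:: a].
(* free reduction: two paths with common endpoints are homotopic rel endpoints
   iff they have the same free reduction *)
Definition freduce (s : seq oedge) : seq oedge := foldr rpush [::] s.

(* f, g : G1 -> G2 are (freely) homotopic: vertex tracks gam v from f(v) to g(v)
   such that each edge square f(e) gam(tau e) ~ gam(iota e) g(e) commutes up to
   homotopy rel endpoints *)
Definition ghomotopic G1 G2 (f g : gmap) : Prop :=
  exists gam : nat -> seq oedge,
    (forall v, v < nV G1 -> vpath G2 (gam v) (mV f v) (mV g v)) /\
    (forall x, x < nE G1 ->
       freduce (mE f (x, true) ++ gam (ter G1 x)) = freduce (gam (ini G1 x) ++ mE g (x, true))).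

Definition homotopy_equiv G1 G2 (f : gmap) : Prop :=
  exists g, [/\ is_cmap G2 G1 g, ghomotopic G1 G1 (gcomp g f) gid
              & ghomotopic G2 G2 (gcomp f g) gid].

Definition trans_mx G (f : gmap) : 'M[int]_(nE G) :=
  \matrix_(i, j) Posz (count (fun a : oedge => a.1 == (j : nat)) (mE f ((i : nat), true))).

Definition irreducible_mx n (A : 'M[int]_n) : Prop :=
  forall i j, exists2 k, (0 < k)%N & (0 < (A ^+ k) i j)%R.

(* valence: number of oriented edges starting at v (loops count twice) *)
Definition valence G (v : nat) : nat :=
  \sum_(x < nE G) ((ini G x == v) + (ter G x == v)).

Definition irreducible_map G (f : gmap) : Prop :=
  irreducible_mx (trans_mx G f) /\ forall v, v < nV G -> 3 <= valence G v.

Definition expanding G (f : gmap) : Prop :=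
  forall x, x < nE G -> forall N, exists n0, forall n, n0 <= n ->
    N <= size (mE (iter n (gcomp f) gid) (x, true)).

Inductive fold_kind := CompleteF | ProperFullF | PartialF.
(* fold of fe1 over fe0 *)
Record fold_spec := FoldSpec { fkind : fold_kind; fe0 : oedge; fe1 : oedge }.

Definition fold_valid G (d : fold_spec) : bool :=
  [&& ovalid G (fe0 d), ovalid G (fe1 d), (fe0 d).1 != (fe1 d).1
    & oini G (fe0 d) == oini G (fe1 d)].

Definition upd (g : nat -> nat) (x y : nat) : nat -> nat :=
  fun z => if z == x then y else g z.

Definition set_oends G (a : oedge) (p q : nat) : graph :=
  if a.2 then Graph (nV G) (nE G) (upd (ini G) a.1 p) (upd (ter G) a.1 q)
  else Graph (nV G) (nE G) (upd (ini G) a.1 q) (upd (ter G) a.1 p).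

Definition oimg_pos (a : oedge) (s : seq oedge) : seq oedge :=
  if a.2 then s else revp s.
Definition mk_emap (pos : nat -> seq oedge) (a : oedge) : seq oedge :=
  if a.2 then pos a.1 else revp (pos a.1).

(* proper full fold of a1 over a0: a1 = a1'' a1', a1'' identified with a0;
   a1' keeps the name of a1. *)
Definition proper_full_fold G (a0 a1 : oedge) : graph * gmap :=
  (set_oends G a1 (oter G a0) (oter G a1),
   GMap id (mk_emap (fun x => if x == a1.1 then oimg_pos a1 [:: a0; a1] else [:: (x, true)]))).

(* partial fold: a0 = a0' a0'', a1 = a1'' a1', a1'' identified with a0'.
   New vertex w = nV G (the subdivision point), new edge y = nE G (a0', positively
   oriented); a0'' keeps the name of a0 and a1' keeps the name of a1. *)
Definition partial_fold G (a0 a1 : oedge) : graph * gmap :=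
  let w := nV G in let y := nE G in
  let Gext := Graph (nV G).+1 (nE G).+1 (upd (ini G) y (oini G a0)) (upd (ter G) y w) in
  (set_oends (set_oends Gext a0 w (oter G a0)) a1 w (oter G a1),
   GMap id (mk_emap (fun x => if x == a0.1 then oimg_pos a0 [:: (y, true); a0]
                         else if x == a1.1 then oimg_pos a1 [:: (y, true); a1]
                         else [:: (x, true)]))).

(* complete fold: a1 identified with a0 entirely (edge a1.1 deleted, the
   terminal vertex of a1 merged into that of a0; remaining edges and vertices
   renumbered consecutively). *)
Definition complete_fold G (a0 a1 : oedge) : graph * gmap :=
  let t := oter G a0 in let u := oter G a1 in let x1 := a1.1 in
  let rv := fun v => if u == t then v else
              let v' := if v == u then t else v in if v' < u then v' else v'.-1 in
  let nV' := if u == t then nV G else (nV G).-1 in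
  let re := fun x => if x < x1 then x else x.-1 in
  let orig := fun x' => if x' < x1 then x' else x'.+1 in
  (Graph nV' (nE G).-1 (fun x' => rv (ini G (orig x'))) (fun x' => rv (ter G (orig x'))),
   GMap rv (mk_emap (fun x => if x == x1 then oimg_pos a1 [:: (re a0.1, a0.2)]
                             else [:: (re x, true)]))).

Definition apply_fold G (d : fold_spec) : graph * gmap :=
  match fkind d with
  | CompleteF => complete_fold G (fe0 d) (fe1 d)
  | ProperFullF => proper_full_fold G (fe0 d) (fe1 d)
  | PartialF => partial_fold G (fe0 d) (fe1 d)
  end.

Fixpoint chain_valid G (ds : seq fold_spec) : bool :=
  if ds is d :: ds' then fold_valid G d && chain_valid (apply_fold G d).1 ds' else true.
Fixpoint chain_end G (ds : seq fold_spec) : graph :=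
  if ds is d :: ds' then chain_end (apply_fold G d).1 ds' else G.
Fixpoint chain_map G (ds : seq fold_spec) : gmap :=
  if ds is d :: ds' then gcomp (chain_map (apply_fold G d).1 ds') (apply_fold G d).2 else gid.

(* f = h o f_m o ... o f_1 with m = size ds *)
Definition fold_decomposition G (f : gmap) (ds : seq fold_spec) (h : gmap) : Prop :=
  [/\ chain_valid G ds, is_giso (chain_end G ds) G h & geq G f (gcomp h (chain_map G ds))].

Definition mixing (f : gmap) (x : nat) : bool := 1 < size (mE f (x, true)).
Definition surplus G (f : gmap) (x : nat) : bool :=
  ~~ mixing f x &&
  [exists u : 'I_(nE G), ((u : nat) != x) &&
     ((mE f (x, true) == mE f (u : nat, true)) || (mE f (x, true) == revp (mE f (u : nat, true))))].
(* e ~ f(e) for e non-mixing, non-surplus (then f(e) is a single edge) *)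
Definition stack_step G (f : gmap) (i j : 'I_(nE G)) : bool :=
  [&& ~~ mixing f i, ~~ surplus G f i & (head (0, true) (mE f (i : nat, true))).1 == j].
Definition stack_rel G (f : gmap) : rel 'I_(nE G) :=
  fun i j => stack_step f i j || stack_step f j i.
Definition num_stacks G (f : gmap) : nat :=
  #|[set [set j | connect (stack_rel f) i j] | i : 'I_(nE G)]|.

From mathcomp Require Import all_boot all_order all_algebra.
From mathcomp Require Import zify.

(* Follow the images of the edges of G through the folds.  A proper full fold
   increases the total length of these image paths by at least one, a partial
   fold by at least two while adding one edge, and a complete fold deletes one
   edge without changing lengths; as the last graph is isomorphic to G, the total
   length of the f(e) exceeds the number of edges of G by at least m.
   For the stacks: by expansion every stack contains a mixing or surplus edge,
   and a fold creates at most 1 (proper full), 2 (partial, or complete fold of a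
   bigon) or 0 (complete fold merging two vertices, since f_V is injective) new
   mixing or surplus edges.  Comparing the vertex and edge counts of G and of the
   last graph shows that every complete fold merges two vertices and that there
   are as many complete as partial folds, so these bounds add up to m. *)

Set Implicit Arguments. Unset Strict Implicit. Unset Printing Implicit Defensive.

Implicit Types (G : graph) (a b c : oedge) (s t : seq oedge).

Lemma orevK : involutive orev.
Proof. by case=> x []. Qed.

Lemma revp_cat s t : revp (s ++ t) = revp t ++ revp s.
Proof. by rewrite /revp rev_cat map_cat. Qed.

Lemma revp_cons a s : revp (a :: s) = revp s ++ [:: orev a].
Proof. by rewrite -cat1s revp_cat. Qed.

Lemma revpK : involutive revp.
Proof. by elim=> //= a s IH; rewrite revp_cons revp_cat IH /= orevK. Qed.

Lemma size_revp s : size (revp s) = size s.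
Proof. by rewrite /revp size_map size_rev. Qed.

Lemma oini_orev G a : oini G (orev a) = oter G a.
Proof. by case: a => x []. Qed.

Lemma oter_orev G a : oter G (orev a) = oini G a.
Proof. by case: a => x []. Qed.

Lemma all_revp (P : pred oedge) s :
  (forall a, P (orev a) = P a) -> all P (revp s) = all P s.
Proof. by move=> HP; rewrite /revp all_map all_rev; apply: eq_all. Qed.

Lemma oedge_fst_eq (a c : oedge) : a.1 = c.1 -> a = c \/ a = orev c.
Proof. by case: a c => x b [y d] /= ->; case: b; case: d; auto. Qed.

Definition pfirst (s : seq oedge) := head (0, true) s.
Definition plast (s : seq oedge) := last (0, true) s.

Lemma pfirst_cat s t : s != [::] -> pfirst (s ++ t) = pfirst s.
Proof. by case: s. Qed.

Lemma plast_cat s t : t != [::] -> plast (s ++ t) = plast t.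
Proof. by case: t => // b t _; rewrite /plast last_cat. Qed.

Lemma pfirst_revp s : s != [::] -> pfirst (revp s) = orev (plast s).
Proof. by case/lastP: s => // s b _; rewrite /revp /pfirst /plast rev_rcons last_rcons. Qed.

Lemma plast_revp s : s != [::] -> plast (revp s) = orev (pfirst s).
Proof. by case: s => // b s _; rewrite /revp /pfirst /plast rev_cons map_rcons last_rcons. Qed.

Lemma all_pfirst (P : pred oedge) s : s != [::] -> all P s -> P (pfirst s).
Proof. by case: s => //= a s _ /andP[]. Qed.

Lemma all_plast (P : pred oedge) s : s != [::] -> all P s -> P (plast s).
Proof. by case: s => // a s _ /allP; apply; rewrite /plast /=; apply: mem_last. Qed.

Section MapPath.
Variable phi : gmap.

Lemma mapP_cons a s : mapP phi (a :: s) = mE phi a ++ mapP phi s.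
Proof. by []. Qed.

Lemma mapP_cat s t : mapP phi (s ++ t) = mapP phi s ++ mapP phi t.
Proof. by rewrite /mapP map_cat flatten_cat. Qed.

Lemma mapP_seq1 a : mapP phi [:: a] = mE phi a.
Proof. exact: cats0. Qed.

Lemma all_mapP (P Q : pred oedge) s :
  (forall a, P a -> all Q (mE phi a)) -> all P s -> all Q (mapP phi s).
Proof. by move=> H; elim: s => //= a s IH /andP[Pa Ps]; rewrite all_cat H ?IH. Qed.

Lemma has_mapP (P : pred oedge) s : has P (mapP phi s) = has (fun a => has P (mE phi a)) s.
Proof. by elim: s => //= a s IH; rewrite has_cat IH. Qed.

Lemma mapP_revp (P : pred oedge) s :
  (forall a, P a -> mE phi (orev a) = revp (mE phi a)) -> all P s ->
  mapP phi (revp s) = revp (mapP phi s).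
Proof.
move=> H; elim: s => // a s IH /andP[Pa Ps].
by rewrite revp_cons mapP_cat mapP_seq1 H // IH // mapP_cons revp_cat.
Qed.

Lemma size_mapP_count (p q : pred oedge) s :
  (forall a, size (mE phi a) = 1 + p a + q a) ->
  size (mapP phi s) = size s + count p s + count q s.
Proof. by move=> H; elim: s => //= a s IH; rewrite size_cat IH H; lia. Qed.

Hypothesis phi_nonnil : forall a, mE phi a != [::].

Lemma mapP_eq_nil s : (mapP phi s == [::]) = (s == [::]).
Proof. by case: s => // a s; rewrite mapP_cons; case: (mE phi a) (phi_nonnil a). Qed.

Lemma pfirst_mapP s : s != [::] -> pfirst (mapP phi s) = pfirst (mE phi (pfirst s)).
Proof. by case: s => // a s _; rewrite mapP_cons pfirst_cat. Qed.

Lemma plast_mapP s : s != [::] -> plast (mapP phi s) = plast (mE phi (plast s)).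
Proof.
elim: s => // a [|b s] IH _; first by rewrite mapP_seq1.
by rewrite mapP_cons plast_cat ?mapP_eq_nil // IH.
Qed.

Lemma size_mapP_ge s : size s <= size (mapP phi s).
Proof.
elim: s => //= a s IH; rewrite size_cat -add1n leq_add //.
by rewrite lt0n size_eq0 phi_nonnil.
Qed.

End MapPath.

Lemma mapP_gcomp g phi s : mapP (gcomp g phi) s = mapP g (mapP phi s).
Proof. by elim: s => //= a s IH; rewrite !mapP_cons IH mapP_cat. Qed.

Lemma mapP_gid s : mapP gid s = s.
Proof. by elim: s => //= a s IH; rewrite mapP_cons IH. Qed.

Lemma upd_same g x y : upd g x y x = y.
Proof. by rewrite /upd eqxx. Qed.

Lemma upd_other g x y z : z != x -> upd g x y z = g z.
Proof. by rewrite /upd => /negbTE ->. Qed.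

Section SetOends.
Variables (G : graph) (c : oedge) (p q : nat).

Lemma nV_set_oends : nV (set_oends G c p q) = nV G.
Proof. by rewrite /set_oends; case: ifP. Qed.

Lemma nE_set_oends : nE (set_oends G c p q) = nE G.
Proof. by rewrite /set_oends; case: ifP. Qed.

Lemma ovalid_set_oends a : ovalid (set_oends G c p q) a = ovalid G a.
Proof. by rewrite /ovalid nE_set_oends. Qed.

Lemma oter_set_oends : oter (set_oends G c p q) c = q.
Proof. by case: c => x []; rewrite /set_oends /oter /= upd_same. Qed.

Lemma oini_set_oends_other a : a.1 != c.1 -> oini (set_oends G c p q) a = oini G a.
Proof. by case: c => x []; case: a => z [] /= H; rewrite /set_oends /oini /= upd_other. Qed.

Lemma oter_set_oends_other a : a.1 != c.1 -> oter (set_oends G c p q) a = oter G a.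
Proof. by case: c => x []; case: a => z [] /= H; rewrite /set_oends /oter /= upd_other. Qed.

End SetOends.

Lemma mk_emap_orev pos a : mk_emap pos (orev a) = revp (mk_emap pos a).
Proof. by case: a => x []; rewrite /mk_emap /= ?revpK. Qed.

Lemma mk_emap_oimg_pos (c : oedge) s (b : bool) :
  (if b then oimg_pos c s else revp (oimg_pos c s)) = if b == c.2 then s else revp s.
Proof. by case: b; case: c => x []; rewrite /oimg_pos /= ?revpK. Qed.

Definition respects_ends G G1 (phi : gmap) a :=
  oini G1 (pfirst (mE phi a)) = mV phi (oini G a) /\
  oter G1 (plast (mE phi a)) = mV phi (oter G a).

Definition edge_map G G1 (phi : gmap) :=
  [/\ forall a, mE phi a != [::],
      forall a, mE phi (orev a) = revp (mE phi a),
      forall a, ovalid G a -> all (ovalid G1) (mE phi a)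
    & forall a, ovalid G a -> respects_ends G G1 phi a].

Definition image_covers G G1 (phi : gmap) :=
  forall x, x < nE G1 -> exists2 x0, x0 < nE G &
    forall b, b.1 = x0 -> has (fun c => c.1 == x) (mE phi b).

Lemma respects_ends_fst G G1 phi c :
  (forall a, mE phi (orev a) = revp (mE phi a)) -> mE phi c != [::] ->
  respects_ends G G1 phi c -> forall a, a.1 = c.1 -> respects_ends G G1 phi a.
Proof.
move=> Hrev Hc [Hini Hter] a /oedge_fst_eq [->|->] //.
by rewrite /respects_ends Hrev pfirst_revp // plast_revp // !oini_orev !oter_orev.
Qed.

Section Folds.
Variables (G : graph) (a0 a1 : oedge).
Hypotheses (a0_valid : ovalid G a0) (a1_valid : ovalid G a1) (a01_neq : a0.1 != a1.1)
  (a01_ini : oini G a0 = oini G a1).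

Section ProperFull.
Let G1 := (proper_full_fold G a0 a1).1.
Let phi := (proper_full_fold G a0 a1).2.

Lemma proper_full_foldE a : mE phi a =
  if a.1 == a1.1 then (if a.2 == a1.2 then [:: a0; a1] else revp [:: a0; a1]) else [:: a].
Proof.
case: a => x b; rewrite /phi /= /mk_emap /=.
by have [_|_] := eqVneq x a1.1; [rewrite mk_emap_oimg_pos | case: b].
Qed.

Lemma size_proper_full_fold a : size (mE phi a) = 1 + (a.1 == a1.1).
Proof. by rewrite proper_full_foldE; do 2?case: ifP => _ //; rewrite size_revp. Qed.

Lemma proper_full_fold_single_inj a b : size (mE phi a) = 1 -> mE phi a = mE phi b -> a = b.
Proof.
rewrite size_proper_full_fold; case Ea: (a.1 == a1.1) => // _ Hab.
move/(congr1 size): (Hab); rewrite !size_proper_full_fold Ea; case Eb: (b.1 == a1.1) => // _.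
by move: Hab; rewrite !proper_full_foldE Ea Eb; case.
Qed.

Lemma proper_full_fold_edge_map : edge_map G G1 phi.
Proof.
have Hrev a : mE phi (orev a) = revp (mE phi a) by exact: mk_emap_orev.
have Hnil a : mE phi a != [::] by rewrite -size_eq0 size_proper_full_fold.
split=> // a Ha.
  have valid1 : ovalid G1 =1 ovalid G by move=> c; apply: ovalid_set_oends.
  rewrite (eq_all valid1) proper_full_foldE; case: ifP => _; last by rewrite /= Ha.
  by case: ifP => _; rewrite ?all_revp //= a0_valid a1_valid.
have [/eqP Ea|Na] := boolP (a.1 == a1.1).
  apply: (respects_ends_fst Hrev (Hnil a1) _ Ea).
  rewrite /respects_ends proper_full_foldE !eqxx /pfirst /plast /= /G1 /=.
  by rewrite oter_set_oends oini_set_oends_other.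
rewrite /respects_ends proper_full_foldE (negbTE Na) /pfirst /plast /= /G1 /=.
by rewrite oini_set_oends_other // oter_set_oends_other.
Qed.

Lemma proper_full_fold_covers : image_covers G G1 phi.
Proof.
move=> x; rewrite nE_set_oends => Hx; exists x => // b <-.
rewrite proper_full_foldE; case: eqP => [Eb|_]; last by rewrite /= eqxx.
by case: ifP => _; rewrite /= Eb eqxx ?orbT.
Qed.

End ProperFull.

Section Partial.
Let G1 := (partial_fold G a0 a1).1.
Let phi := (partial_fold G a0 a1).2.
Let y := nE G.

Lemma partial_foldE a : mE phi a =
  if a.1 == a0.1 then (if a.2 == a0.2 then [:: (y, true); a0] else revp [:: (y, true); a0])
  else if a.1 == a1.1 then (if a.2 == a1.2 then [:: (y, true); a1] else revp [:: (y, true); a1])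
  else [:: a].
Proof.
case: a => x b; rewrite /phi /= /mk_emap /=.
have [_|_] := eqVneq x a0.1; first by rewrite mk_emap_oimg_pos.
by have [_|_] := eqVneq x a1.1; [rewrite mk_emap_oimg_pos | case: b].
Qed.

Lemma nV_partial_fold : nV G1 = (nV G).+1.
Proof. by rewrite /G1 /= !nV_set_oends. Qed.

Lemma nE_partial_fold : nE G1 = (nE G).+1.
Proof. by rewrite /G1 /= !nE_set_oends. Qed.

Lemma size_partial_fold a : size (mE phi a) = 1 + (a.1 == a0.1) + (a.1 == a1.1).
Proof.
rewrite partial_foldE; case: eqP => [->|_].
  by rewrite (negbTE a01_neq); case: ifP; rewrite ?size_revp.
by do 2?case: ifP => _ //; rewrite size_revp.
Qed.

Lemma partial_fold_single_inj a b : size (mE phi a) = 1 -> mE phi a = mE phi b -> a = b.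
Proof.
rewrite size_partial_fold; case Ea: (a.1 == a0.1) => //; case Ea': (a.1 == a1.1) => // _ Hab.
move/(congr1 size): (Hab); rewrite !size_partial_fold Ea Ea'.
case Eb: (b.1 == a0.1) => //; case Eb': (b.1 == a1.1) => // _.
by move: Hab; rewrite !partial_foldE Ea Ea' Eb Eb'; case.
Qed.

Lemma partial_fold_edge_map : edge_map G G1 phi.
Proof.
have Hrev a : mE phi (orev a) = revp (mE phi a) by exact: mk_emap_orev.
have Hnil a : mE phi a != [::] by rewrite -size_eq0 size_partial_fold.
have valid1 c : ovalid G1 c = (c.1 < (nE G).+1) by rewrite /ovalid nE_partial_fold.
have Hy0 : y != a0.1 by rewrite eq_sym (ltn_eqF a0_valid).
have Hy1 : y != a1.1 by rewrite eq_sym (ltn_eqF a1_valid).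
have ini_y : oini G1 (y, true) = oini G a0.
  by rewrite /G1 /= !oini_set_oends_other // /oini /= upd_same.
split=> // a Ha.
  rewrite (eq_all valid1) partial_foldE.
  by (do ?case: ifP => _); rewrite ?all_revp //= !ltnS ?leqnn ltnW.
have [/eqP Ea|Na0] := boolP (a.1 == a0.1).
  apply: (respects_ends_fst Hrev (Hnil a0) _ Ea).
  rewrite /respects_ends partial_foldE !eqxx /pfirst /plast /= ini_y.
  by rewrite /G1 /= oter_set_oends_other // oter_set_oends.
have [/eqP Ea|Na1] := boolP (a.1 == a1.1).
  apply: (respects_ends_fst Hrev (Hnil a1) _ Ea).
  rewrite /respects_ends partial_foldE eq_sym (negbTE a01_neq) !eqxx /pfirst /plast /= ini_y.
  by rewrite /G1 /= oter_set_oends.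
have Nay : a.1 != y by rewrite (ltn_eqF Ha).
rewrite /respects_ends partial_foldE (negbTE Na0) (negbTE Na1) /pfirst /plast /= /G1 /=.
rewrite !oini_set_oends_other // !oter_set_oends_other //.
by case: a Ha Nay {Na0 Na1} => x [] _ Nxy; rewrite /oini /oter /= !upd_other.
Qed.

Lemma partial_fold_covers : image_covers G G1 phi.
Proof.
move=> x; rewrite nE_partial_fold ltnS leq_eqVlt => /orP[/eqP ->|Hx].
  exists a0.1 => // b Eb; rewrite partial_foldE Eb eqxx.
  by case: ifP => _; rewrite /= eqxx ?orbT.
exists x => // b <-; rewrite partial_foldE.
case: eqP => [Eb|_]; first by case: ifP => _; rewrite /= Eb eqxx ?orbT.
case: eqP => [Eb|_]; last by rewrite /= eqxx.
by case: ifP => _; rewrite /= Eb eqxx ?orbT.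
Qed.

End Partial.

Section Complete.
Let G1 := (complete_fold G a0 a1).1.
Let phi := (complete_fold G a0 a1).2.
(* Deleting edge [a1.1] renumbers the edges above it: [re] is the renumbering
   and [orig] its inverse. *)
Let x1 := a1.1.
Let re x := if x < x1 then x else x.-1.
Let orig x' := if x' < x1 then x' else x'.+1.

Lemma complete_foldE a : mE phi a =
  if a.1 == x1 then [:: (re a0.1, if a.2 == a1.2 then a0.2 else ~~ a0.2)]
  else [:: (re a.1, a.2)].
Proof.
case: a => x b; rewrite /phi /= /mk_emap /=.
have [_|_] := eqVneq x a1.1; last by case: b.
by rewrite mk_emap_oimg_pos; case: ifP.
Qed.

Lemma size_complete_fold a : size (mE phi a) = 1.
Proof. by rewrite complete_foldE; case: ifP. Qed.

Let orig_re x : x != x1 -> orig (re x) = x.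
Proof. by rewrite /orig /re => Nx; case: (ltnP x x1) => [->|] //; case: ltnP; lia. Qed.

Let re_orig x : re (orig x) = x.
Proof. by rewrite /orig /re; case: (ltnP x x1) => [->|] //; case: ltnP; lia. Qed.

Let orig_neq x : orig x != x1.
Proof. by rewrite /orig; case: ltnP; lia. Qed.

Lemma nE_complete_fold : (nE G1).+1 = nE G.
Proof. by rewrite /G1 /=; move: a1_valid; rewrite /ovalid; lia. Qed.

Lemma nV_complete_fold : nV G <= nV G1 + (oter G a0 != oter G a1).
Proof. by rewrite /G1 /= eq_sym; case: eqP => _ /=; lia. Qed.

Lemma complete_fold_merges : mV phi (oter G a0) = mV phi (oter G a1).
Proof.
rewrite /phi /=; case: eqP => // Nt; rewrite eqxx.
by case: eqP => // Et; rewrite Et in Nt.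
Qed.

Lemma complete_fold_edge_map : edge_map G G1 phi.
Proof.
have Hrev a : mE phi (orev a) = revp (mE phi a) by exact: mk_emap_orev.
have Hnil a : mE phi a != [::] by rewrite -size_eq0 size_complete_fold.
have ini1 r (o : bool) : oini G1 (r, o) = mV phi (oini G (orig r, o)) by case: o.
have ter1 r (o : bool) : oter G1 (r, o) = mV phi (oter G (orig r, o)) by case: o.
split=> // a Ha.
  have re_valid x : x < nE G -> x != x1 -> re x < nE G1.
    move=> Hx Nx; rewrite /G1 /= /re; move: a1_valid Nx; rewrite /ovalid -/x1.
    by case: (ltnP x x1); lia.
  by rewrite complete_foldE; case: ifP => [_|/negbT Na]; rewrite /= andbT /ovalid re_valid.
have [/eqP Ea|Na] := boolP (a.1 == x1).
  apply: (respects_ends_fst Hrev (Hnil a1) _ Ea).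
  rewrite /respects_ends complete_foldE !eqxx /pfirst /plast [head _ _]/= [last _ _]/=.
  by rewrite ini1 ter1 orig_re // -!surjective_pairing -complete_fold_merges -a01_ini.
rewrite /respects_ends complete_foldE (negbTE Na) /pfirst /plast [head _ _]/= [last _ _]/=.
by rewrite ini1 ter1 orig_re.
Qed.

Lemma complete_fold_collision a b : a != b -> mE phi a = mE phi b ->
  (a.1 = a0.1 /\ b.1 = a1.1) \/ (a.1 = a1.1 /\ b.1 = a0.1).
Proof.
move=> Nab; rewrite !complete_foldE.
have [Ea|Na] := eqVneq a.1 x1; have [Eb|Nb] := eqVneq b.1 x1.
- case=> E2; case/negP: Nab; apply/eqP.
  rewrite [a]surjective_pairing [b]surjective_pairing Ea Eb; congr pair.
  by move: E2; case: (a.2); case: (b.2); case: (a1.2); case: (a0.2).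
- by case=> /(congr1 orig); rewrite !orig_re // => Eb; right.
- by case=> /(congr1 orig); rewrite !orig_re // => Ea; left.
- case=> /(congr1 orig); rewrite !orig_re // => Eab Ecd.
  by move: Nab; case: a b Eab Ecd {Na Nb} => x c [z d] /= -> ->; rewrite eqxx.
Qed.

Lemma complete_fold_covers : image_covers G G1 phi.
Proof.
move=> x Hx; exists (orig x).
  by move: Hx; rewrite -nE_complete_fold /orig; case: (ltnP x x1); lia.
by move=> b Eb; rewrite complete_foldE Eb (negbTE (orig_neq x)) /= re_orig eqxx.
Qed.

End Complete.
End Folds.

Lemma fold_edge_map G d : fold_valid G d -> edge_map G (apply_fold G d).1 (apply_fold G d).2.
Proof.
case: d => [[] a0 a1] /and4P[h0 h1 hne /eqP hini].
- exact: complete_fold_edge_map.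
- exact: proper_full_fold_edge_map.
- exact: partial_fold_edge_map.
Qed.

Lemma fold_image_covers G d :
  fold_valid G d -> image_covers G (apply_fold G d).1 (apply_fold G d).2.
Proof.
case: d => [[] a0 a1] /and4P[h0 h1 hne /eqP hini].
- exact: complete_fold_covers.
- exact: proper_full_fold_covers.
- exact: partial_fold_covers.
Qed.

Lemma edge_map_path G G1 phi s : edge_map G G1 phi -> s != [::] -> all (ovalid G) s ->
  [/\ mapP phi s != [::], all (ovalid G1) (mapP phi s),
      oini G1 (pfirst (mapP phi s)) = mV phi (oini G (pfirst s))
    & oter G1 (plast (mapP phi s)) = mV phi (oter G (plast s))].
Proof.
case=> Hnil _ Hvalid Hends Hs Hv; split.
- by rewrite mapP_eq_nil.
- exact: all_mapP Hv.
- by rewrite pfirst_mapP //; have [-> _] := Hends _ (all_pfirst Hs Hv).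
- by rewrite plast_mapP //; have [_ ->] := Hends _ (all_plast Hs Hv).
Qed.

Lemma edge_map_gcomp G G1 G2 phi psi :
  edge_map G G1 phi -> edge_map G1 G2 psi -> edge_map G G2 (gcomp psi phi).
Proof.
move=> phi_edge psi_edge; have [Hnil Hrev Hvalid Hends] := phi_edge.
have [Hnil' Hrev' _ _] := psi_edge.
split=> [a|a|a Ha|a Ha] /=.
- by rewrite mapP_eq_nil.
- by rewrite Hrev (@mapP_revp _ predT) ?all_predT.
- by have [] := edge_map_path psi_edge (Hnil a) (Hvalid a Ha).
- have [_ _ Hini Hter] := edge_map_path psi_edge (Hnil a) (Hvalid a Ha).
  by have [Hini' Hter'] := Hends a Ha; rewrite /respects_ends Hini Hter Hini' Hter'.
Qed.

Lemma edge_map_gid G : edge_map G G gid.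
Proof. by split=> // a Ha; rewrite /= Ha. Qed.

Lemma chain_edge_map G ds : chain_valid G ds -> edge_map G (chain_end G ds) (chain_map G ds).
Proof.
elim: ds G => [|d ds IH] G /=; first by move=> _; apply: edge_map_gid.
by case/andP=> Hd Hds; apply: edge_map_gcomp (fold_edge_map Hd) (IH _ Hds).
Qed.

Fixpoint fold_count (k : graph -> fold_spec -> nat) G ds : nat :=
  if ds is d :: ds' then k G d + fold_count k (apply_fold G d).1 ds' else 0.

Definition ind_proper_full (G : graph) d : nat := if fkind d is ProperFullF then 1 else 0.
Definition ind_partial (G : graph) d : nat := if fkind d is PartialF then 1 else 0.
(* A complete fold either merges the terminal vertices of its two edges or
   collapses a bigon (two edges with the same endpoints). *)
Definition ind_complete_merge G d : nat :=
  if fkind d is CompleteF then oter G (fe0 d) != oter G (fe1 d) else 0.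
Definition ind_complete_bigon G d : nat :=
  if fkind d is CompleteF then oter G (fe0 d) == oter G (fe1 d) else 0.

Lemma size_fold_count G ds :
  size ds = fold_count ind_proper_full G ds + fold_count ind_partial G ds +
            fold_count ind_complete_merge G ds + fold_count ind_complete_bigon G ds.
Proof.
elim: ds G => //= d ds IH G; rewrite (IH (apply_fold G d).1).
rewrite /ind_proper_full /ind_partial /ind_complete_merge /ind_complete_bigon.
by case: (fkind d) => //=; case: (oter G (fe0 d) == oter G (fe1 d)) => /=; lia.
Qed.

Lemma fold_count_sizes G ds : chain_valid G ds ->
  nV G + fold_count ind_partial G ds <= nV (chain_end G ds) + fold_count ind_complete_merge G ds /\
  nE (chain_end G ds) + fold_count ind_complete_merge G ds + fold_count ind_complete_bigon G ds =
    nE G + fold_count ind_partial G ds.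
Proof.
elim: ds G => /= [|[k a0 a1] ds IH] G; first by rewrite !addn0.
rewrite {1}/fold_valid /= => /andP[/and4P[h0 h1 hne /eqP hini] /IH[]].
rewrite /apply_fold /ind_partial /ind_complete_merge /ind_complete_bigon /=; case: k => /=.
- move: (nE_complete_fold h0 h1 hne hini) (nV_complete_fold h0 h1 hne hini).
  by case: (oter G a0 == oter G a1) => /=; lia.
- by rewrite nV_set_oends nE_set_oends; lia.
- by rewrite nV_partial_fold nE_partial_fold; lia.
Qed.

Definition covers G n (Q : nat -> seq oedge) :=
  forall x, x < nE G -> exists2 i, i < n & has (fun a => a.1 == x) (Q i).

Definition total_size n (Q : nat -> seq oedge) := \sum_(i < n) size (Q i).

Lemma covers_mapP G G1 n Q phi :
  covers G n Q -> image_covers G G1 phi -> covers G1 n (fun i => mapP phi (Q i)).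
Proof.
move=> HQ Hphi x /Hphi[x0 /HQ[i Hi Hx0] Hx]; exists i => //.
by rewrite has_mapP; apply: sub_has Hx0 => b /eqP; apply: Hx.
Qed.

Lemma covers_count G n Q x : covers G n Q -> x < nE G ->
  0 < \sum_(i < n) count (fun a => a.1 == x) (Q i).
Proof.
move=> HQ /HQ[i Hi Hx]; rewrite (bigD1 (Ordinal Hi)) //=.
by rewrite has_count in Hx; apply: leq_trans Hx (leq_addr _ _).
Qed.

Lemma total_size_mapP n Q phi (p q : pred oedge) :
  (forall a, size (mE phi a) = 1 + p a + q a) ->
  total_size n (fun i => mapP phi (Q i)) =
    total_size n Q + \sum_(i < n) count p (Q i) + \sum_(i < n) count q (Q i).
Proof.
move=> H; rewrite /total_size -!big_split.
by apply: eq_bigr => i _; apply: size_mapP_count.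
Qed.

Lemma fold_total_size G d n Q : fold_valid G d -> covers G n Q ->
  total_size n Q + nE (apply_fold G d).1 <
    total_size n (fun i => mapP (apply_fold G d).2 (Q i)) + nE G.
Proof.
case: d => [k a0 a1]; rewrite /fold_valid /= => /and4P[h0 h1 hne /eqP hini] HQ.
case: k; rewrite /apply_fold /=.
- have Hs a : size (mE (complete_fold G a0 a1).2 a) = 1 + pred0 a + pred0 a.
    by rewrite size_complete_fold.
  by rewrite (total_size_mapP _ _ Hs); have := nE_complete_fold h0 h1 hne hini; lia.
- have Hs a : size (mE (proper_full_fold G a0 a1).2 a) = 1 + (a.1 == a1.1) + pred0 a.
    by rewrite size_proper_full_fold addn0.
  by rewrite (total_size_mapP _ _ Hs) nE_set_oends; have := covers_count HQ h1; lia.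
- rewrite (total_size_mapP _ _ (size_partial_fold _ hne)) nE_partial_fold.
  by have := covers_count HQ h0; have := covers_count HQ h1; lia.
Qed.

Lemma chain_total_size G ds n Q : chain_valid G ds -> covers G n Q ->
  total_size n Q + nE (chain_end G ds) + size ds <=
    total_size n (fun i => mapP (chain_map G ds) (Q i)) + nE G.
Proof.
elim: ds G Q => [|d ds IH] G Q /=.
  by move=> _ _; rewrite addn0 leq_add2r; apply: leq_sum => i _; rewrite mapP_gid.
case/andP=> Hd Hds HQ.
have := IH _ _ Hds (covers_mapP HQ (fold_image_covers Hd)); have := fold_total_size Hd HQ.
set F := chain_map _ ds; set phi := (apply_fold G d).2.
have -> : total_size n (fun i => mapP (gcomp F phi) (Q i)) =
          total_size n (fun i => mapP F (mapP phi (Q i))).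
  by apply: eq_bigr => i _; rewrite mapP_gcomp.
lia.
Qed.

Lemma chain_length_bound G ds : chain_valid G ds -> nE G <= nE (chain_end G ds) ->
  size ds + nE G <= \sum_(x < nE G) size (mE (chain_map G ds) (x : nat, true)).
Proof.
move=> Hds HnE.
have Hcov : covers G (nE G) (fun i => [:: (i, true)]) by move=> x Hx; exists x; rewrite //= eqxx.
have := chain_total_size Hds Hcov; rewrite /total_size /= sum1_card card_ord.
by under eq_bigr do rewrite mapP_seq1; lia.
Qed.

Definition mixsur_set n (Q : nat -> seq oedge) : {set 'I_n} :=
  [set i : 'I_n | (1 < size (Q i)) ||
     [exists u : 'I_n, (u != i) && ((Q i == Q u) || (Q i == revp (Q u)))]].

Definition single_set n (Q : nat -> seq oedge) c : {set 'I_n} :=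
  [set i : 'I_n | (i \notin mixsur_set n Q) && ((Q i == [:: c]) || (Q i == [:: orev c]))].

Definition path_family G n (Q : nat -> seq oedge) (src dst : nat -> nat) :=
  forall j : 'I_n, [/\ Q j != [::], all (ovalid G) (Q j),
                     oini G (pfirst (Q j)) = src j & oter G (plast (Q j)) = dst j].

Definition inj_on_ends (V : nat -> nat) n (src dst : nat -> nat) :=
  forall (i j : 'I_n) v w, v \in [:: src i; dst i] -> w \in [:: src j; dst j] ->
    V v = V w -> v = w.

Section MixingSurplus.
Variables (n : nat) (Q : nat -> seq oedge).

Lemma eq_mixsur_set Q' : Q =1 Q' -> mixsur_set n Q = mixsur_set n Q'.
Proof.
move=> EQ; apply/setP => i; rewrite !inE EQ; congr orb.
by apply: eq_existsb => u; rewrite !EQ.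
Qed.

Lemma card_single_set_le1 c : #|single_set n Q c| <= 1.
Proof.
rewrite leqNgt; apply/negP => /card_gt1P [i [j [Hi Hj Nij]]].
move: Hi Hj; rewrite !inE => /andP[/negP Ni Hi] /andP[_ Hj]; apply: Ni.
apply/orP; right; apply/existsP; exists j; rewrite eq_sym Nij /=.
by case/orP: Hi => /eqP ->; case/orP: Hj => /eqP ->; rewrite /revp /= ?orevK eqxx ?orbT.
Qed.

Lemma mem_single_set c (i : 'I_n) a : i \notin mixsur_set n Q -> Q i = [:: a] -> a.1 = c.1 ->
  i \in single_set n Q c.
Proof. by move=> Ni Ea /oedge_fst_eq[] Eac; rewrite inE Ni Ea Eac eqxx ?orbT. Qed.

Variable phi : gmap.
Hypotheses (phi_nonnil : forall a, mE phi a != [::])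
  (phi_orev : forall a, mE phi (orev a) = revp (mE phi a))
  (Q_nonnil : forall u : 'I_n, Q u != [::]).
Let Q' i := mapP phi (Q i).

Lemma mixsur_set_mapP_new (i : 'I_n) :
  i \in mixsur_set n Q' -> i \notin mixsur_set n Q ->
  exists2 a, Q i = [:: a] &
    (1 < size (mE phi a)) \/
    exists (u : 'I_n) b, [/\ u != i, (Q u = [:: b]) \/ (Q u = [:: orev b]), a != b,
                          size (mE phi a) = 1 & mE phi a = mE phi b].
Proof.
move=> Hin; rewrite inE negb_or => /andP[Hsize /existsPn Hsur].
have [a Ea] : exists a, Q i = [:: a].
  by move: Hsize (Q_nonnil i); case: (Q i) => [|a [|]] //; exists a.
exists a => //; case: (ltnP 1 (size (mE phi a))) => Hs; [by left | right].
have Ha : size (mE phi a) = 1 by apply/eqP; rewrite eqn_leq Hs lt0n size_eq0 phi_nonnil.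
move: Hin; rewrite inE /Q' Ea mapP_seq1 ltnNge Hs /= => /existsP[u /andP[Nui Hcoll]].
move: (Hsur u); rewrite Nui Ea /= negb_or => /andP[N1 N2].
have [b Eb] : exists b, Q u = [:: b].
  have Hsu : size (Q u) <= 1.
    rewrite -Ha; apply: leq_trans (size_mapP_ge phi_nonnil (Q u)) _.
    by case/orP: Hcoll => /eqP ->; rewrite ?size_revp.
  by move: Hsu (Q_nonnil u); case: (Q u) => [|b [|]] //; exists b.
move: Hcoll N1 N2; rewrite /Q' Eb mapP_seq1 => /orP[] /eqP Hcoll N1 N2.
  by exists u, b; split=> //; [left | apply: contraNneq N1 => ->].
exists u, (orev b); split=> //; [by right; rewrite orevK | | by rewrite phi_orev].
by apply: contraNneq N2 => ->.
Qed.

Lemma card_mixsur_set_mapP (A : {set 'I_n}) :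
  (forall i, i \in mixsur_set n Q' -> i \notin mixsur_set n Q -> i \in A) ->
  #|mixsur_set n Q'| <= #|mixsur_set n Q| + #|A|.
Proof.
move=> HA; apply: leq_trans (leq_card_setU _ _).1.
apply/subset_leq_card/subsetP => i Hi; rewrite inE.
by case: (boolP (i \in mixsur_set n Q)) => //= /(HA i Hi).
Qed.

End MixingSurplus.

Lemma path_family_oter G n Q src dst (j : 'I_n) c e :
  path_family G n Q src dst -> Q j = [:: c] -> c.1 = e.1 -> oter G e \in [:: src j; dst j].
Proof.
move=> HQ Ej /oedge_fst_eq Ece; have [_ _] := HQ j; rewrite Ej /pfirst /plast /=.
by case: Ece => -> => [_ <-|<- _]; rewrite ?oini_orev !inE eqxx ?orbT.
Qed.

Section FoldMixingSurplus.
Variables (G : graph) (a0 a1 : oedge) (n : nat) (Q : nat -> seq oedge).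
Hypotheses (a0_valid : ovalid G a0) (a1_valid : ovalid G a1) (a01_neq : a0.1 != a1.1)
  (a01_ini : oini G a0 = oini G a1) (Q_nonnil : forall u : 'I_n, Q u != [::]).
Let S01 := single_set n Q a0 :|: single_set n Q a1.

Let card_S01 : #|S01| <= 2.
Proof.
apply: leq_trans (leq_card_setU _ _).1 _.
by rewrite -[2]/(1 + 1) leq_add ?card_single_set_le1.
Qed.

Lemma proper_full_fold_mixsur :
  #|mixsur_set n (fun j => mapP (proper_full_fold G a0 a1).2 (Q j))| <= #|mixsur_set n Q| + 1.
Proof.
have [Hnil Hrev _ _] := proper_full_fold_edge_map a0_valid a1_valid a01_neq a01_ini.
apply: leq_trans (card_mixsur_set_mapP (A := single_set n Q a1) _) _; last first.
  by rewrite leq_add2l card_single_set_le1.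
move=> i Hi Ni.
have [a Ea [|[u [b [_ _ Nab Ha Hab]]]]] := mixsur_set_mapP_new Hnil Hrev Q_nonnil Hi Ni.
  by rewrite size_proper_full_fold; case: eqP => // Ea1 _; apply: mem_single_set Ea Ea1.
by rewrite (proper_full_fold_single_inj Ha Hab) eqxx in Nab.
Qed.

Lemma partial_fold_mixsur :
  #|mixsur_set n (fun j => mapP (partial_fold G a0 a1).2 (Q j))| <= #|mixsur_set n Q| + 2.
Proof.
have [Hnil Hrev _ _] := partial_fold_edge_map a0_valid a1_valid a01_neq a01_ini.
apply: leq_trans (card_mixsur_set_mapP (A := S01) _) _; first move=> i Hi Ni.
  have [a Ea [|[u [b [_ _ Nab Ha Hab]]]]] := mixsur_set_mapP_new Hnil Hrev Q_nonnil Hi Ni.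
    rewrite size_partial_fold // inE; case: eqP => [Ea0|_] /=.
      by rewrite (mem_single_set Ni Ea Ea0).
    by case: eqP => // Ea1 _; rewrite (mem_single_set Ni Ea Ea1) orbT.
  by rewrite (partial_fold_single_inj a01_neq Ha Hab) eqxx in Nab.
by rewrite leq_add2l card_S01.
Qed.

Lemma complete_fold_mixsur :
  #|mixsur_set n (fun j => mapP (complete_fold G a0 a1).2 (Q j))| <= #|mixsur_set n Q| + 2.
Proof.
have [Hnil Hrev _ _] := complete_fold_edge_map a0_valid a1_valid a01_neq a01_ini.
apply: leq_trans (card_mixsur_set_mapP (A := S01) _) _; first move=> i Hi Ni.
  have [a Ea [|[u [b [_ _ Nab _ Hab]]]]] := mixsur_set_mapP_new Hnil Hrev Q_nonnil Hi Ni.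
    by rewrite size_complete_fold.
  rewrite inE; case: (complete_fold_collision a0_valid a1_valid a01_neq a01_ini Nab Hab).
    by case=> Ea0 _; rewrite (mem_single_set Ni Ea Ea0).
  by case=> Ea1 _; rewrite (mem_single_set Ni Ea Ea1) orbT.
by rewrite leq_add2l card_S01.
Qed.

Lemma complete_fold_merge_mixsur src dst (V : nat -> nat) :
  path_family G n Q src dst -> oter G a0 != oter G a1 ->
  inj_on_ends (fun v => V (mV (complete_fold G a0 a1).2 v)) n src dst ->
  #|mixsur_set n (fun j => mapP (complete_fold G a0 a1).2 (Q j))| <= #|mixsur_set n Q|.
Proof.
set phi := (complete_fold G a0 a1).2; move=> HQ /eqP Nt HV.
have [Hnil Hrev _ _] := complete_fold_edge_map a0_valid a1_valid a01_neq a01_ini.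
rewrite -[X in _ <= X]addn0 -(cards0 'I_n); apply: card_mixsur_set_mapP => i Hi Ni.
have [a Ea [|[u [b [_ Hu Nab _ Hab]]]]] := mixsur_set_mapP_new Hnil Hrev Q_nonnil Hi Ni.
  by rewrite size_complete_fold.
have [b' Eb' Eb'b] : exists2 b', Q u = [:: b'] & b'.1 = b.1.
  by case: Hu => ->; [exists b | exists (orev b)].
have Vt : V (mV phi (oter G a0)) = V (mV phi (oter G a1)) by rewrite complete_fold_merges.
case: Nt; case: (complete_fold_collision a0_valid a1_valid a01_neq a01_ini Nab Hab).
  case=> Ea0 Eb1; apply: HV Vt.
    exact: path_family_oter HQ Ea Ea0.
  exact: path_family_oter HQ Eb' (etrans Eb'b Eb1).
case=> Ea1 Eb0; apply: HV Vt.
  exact: path_family_oter HQ Eb' (etrans Eb'b Eb0).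
exact: path_family_oter HQ Ea Ea1.
Qed.

End FoldMixingSurplus.

Definition fold_weight G d :=
  ind_proper_full G d + 2 * ind_partial G d + 2 * ind_complete_bigon G d.

Lemma fold_mixsur_set G d n Q src dst (V : nat -> nat) :
  fold_valid G d -> path_family G n Q src dst ->
  inj_on_ends (fun v => V (mV (apply_fold G d).2 v)) n src dst ->
  #|mixsur_set n (fun j => mapP (apply_fold G d).2 (Q j))| <= #|mixsur_set n Q| + fold_weight G d.
Proof.
case: d => [k a0 a1]; rewrite /fold_valid /= => /and4P[h0 h1 hne /eqP hini] HQ HV.
have Q_nonnil (u : 'I_n) : Q u != [::] by case: (HQ u).
move: HV; rewrite /fold_weight /ind_proper_full /ind_partial /ind_complete_bigon /apply_fold.
case: k => /= HV.
- have [_|Nt] := boolP (oter G a0 == oter G a1).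
    exact: leq_trans (complete_fold_mixsur h0 h1 hne hini Q_nonnil) _.
  exact: leq_trans (complete_fold_merge_mixsur h0 h1 hne hini Q_nonnil HQ Nt HV) (leq_addr _ _).
- exact: leq_trans (proper_full_fold_mixsur h0 h1 hne hini Q_nonnil) _.
- exact: leq_trans (partial_fold_mixsur h0 h1 hne hini Q_nonnil) _.
Qed.

Lemma chain_mixsur_set G ds n Q src dst : chain_valid G ds -> path_family G n Q src dst ->
  inj_on_ends (mV (chain_map G ds)) n src dst ->
  #|mixsur_set n (fun j => mapP (chain_map G ds) (Q j))| <=
    #|mixsur_set n Q| + fold_count fold_weight G ds.
Proof.
elim: ds G Q src dst => /= [|d ds IH] G Q src dst.
  by move=> _ _ _; rewrite addn0 (@eq_mixsur_set n _ Q) // => j; rewrite mapP_gid.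
case/andP=> Hd Hds HQ HV; set phi := (apply_fold G d).2.
set F := chain_map (apply_fold G d).1 ds.
have -> : mixsur_set n (fun j => mapP (gcomp F phi) (Q j)) =
          mixsur_set n (fun j => mapP F (mapP phi (Q j))).
  by apply: eq_mixsur_set => j; apply: mapP_gcomp.
rewrite addnA; apply: leq_trans (IH _ _ (mV phi \o src) (mV phi \o dst) Hds _ _) _.
- move=> j; have [Qn Qv Qs Qd] := HQ j.
  have [Hn Hv Hs Ht] := edge_map_path (fold_edge_map Hd) Qn Qv.
  by split=> //=; rewrite ?Hs ?Qs ?Ht ?Qd.
- move=> i j v' w' Hv' Hw'.
  have /seq.mapP[v Hv ->] : v' \in map (mV phi) [:: src i; dst i] := Hv'.
  have /seq.mapP[w Hw ->] : w' \in map (mV phi) [:: src j; dst j] := Hw'.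
  by move=> E; rewrite (HV i j v w Hv Hw E).
- by rewrite leq_add2r; apply: fold_mixsur_set Hd HQ HV.
Qed.

Lemma fold_count_weight G ds :
  fold_count fold_weight G ds = fold_count ind_proper_full G ds +
    2 * fold_count ind_partial G ds + 2 * fold_count ind_complete_bigon G ds.
Proof. by elim: ds G => //= d ds IH G; rewrite IH /fold_weight; lia. Qed.

Section Stacks.
Variables (G : graph) (f : gmap).
Hypothesis f_gmap : is_gmap G G f.

Let D := [set i : 'I_(nE G) | mixing f i || surplus G f i].
Let R := @stack_rel G f.

Let head_valid (i : 'I_(nE G)) : (head (0, true) (mE f (i : nat, true))).1 < nE G.
Proof.
have [[_ Hpath _] Hnil] := f_gmap; have Hi : ovalid G (i : nat, true) := ltn_ord i.
move: (Hpath _ Hi) (Hnil _ Hi); case: (mE f _) => [|a s] //= /and3P[/andP[/andP[Ha _] _] _ _] _.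
exact: Ha.
Qed.

Definition stack_succ (i : 'I_(nE G)) : 'I_(nE G) :=
  insubd i (head (0, true) (mE f (i : nat, true))).1.

Lemma iter_stack_succ (i : 'I_(nE G)) k : (forall j, j < k -> iter j stack_succ i \notin D) ->
  connect R i (iter k stack_succ i) /\
  exists o, mE (iter k (gcomp f) gid) (i : nat, true) = [:: ((iter k stack_succ i : nat), o)].
Proof.
have [[_ _ Hrev] Hnil] := f_gmap.
elim: k => [|k IH] Hk; first by split; [apply: connect0 | exists true].
have [IHc [o IHf]] := IH (fun j Hj => Hk j (ltnW Hj)).
have := Hk k (ltnSn k); set y := iter k stack_succ i => Hy.
move: Hy IHc IHf; rewrite inE negb_or => /andP[Nmix Nsur] IHc IHf.
have [c Ec] : exists c, mE f (y : nat, true) = [:: c].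
  move: Nmix (Hnil (y : nat, true) (ltn_ord y)); rewrite /mixing.
  by case: (mE f _) => [|c []] //; exists c.
have succE : (stack_succ y : nat) = c.1.
  by rewrite /stack_succ insubdK; [rewrite Ec | exact: head_valid].
split.
  apply: connect_trans IHc (connect1 _).
  by rewrite /R /stack_rel /stack_step Nmix Nsur /= -/(stack_succ y) succE Ec eqxx.
rewrite iterS /= IHf mapP_seq1 -/y succE.
case: o {IHf}; first by exists c.2; rewrite Ec -surjective_pairing.
by exists (~~ c.2); rewrite Hrev // Ec; case: c {Ec succE}.
Qed.

Hypothesis f_expanding : expanding G f.

Lemma stack_meets_mixing_surplus (i : 'I_(nE G)) : exists2 d, d \in D & connect R i d.
Proof.
have [n0 Hn0] := f_expanding (ltn_ord i) 2.
have [/hasP[k _ Hk]|Hout] := boolP (has (fun k => iter k stack_succ i \in D) (iota 0 n0)).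
  have [k' Hk' Hmin] := ex_minnP (ex_intro (fun k => iter k stack_succ i \in D) k Hk).
  exists (iter k' stack_succ i) => //; apply: (iter_stack_succ _).1 => j Hj.
  by apply/negP => /Hmin; rewrite leqNgt Hj.
have Nout j : j < n0 -> iter j stack_succ i \notin D.
  by move=> Hj; apply: (hasPn Hout); rewrite mem_iota.
have [_ [o Ef]] := iter_stack_succ Nout.
by have := Hn0 n0 (leqnn n0); rewrite Ef.
Qed.

Lemma num_stacks_le : num_stacks G f <= #|D|.
Proof.
have Rsym : connect_sym R by apply: sym_connect_sym => i j; rewrite /R /stack_rel orbC.
apply: leq_trans (leq_imset_card (fun i => [set j | connect R i j]) D).
apply/subset_leq_card/subsetP => X /imsetP[i _ ->].
have [d Hd Hid] := stack_meets_mixing_surplus i; apply/imsetP; exists d => //.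
by apply/setP => j; rewrite !inE (same_connect Rsym Hid).
Qed.

End Stacks.

Lemma leq_of_inj_on n1 n2 (phi : nat -> nat) : (forall x, x < n1 -> phi x < n2) ->
  (forall x y, x < n1 -> y < n1 -> phi x = phi y -> x = y) -> n1 <= n2.
Proof.
move=> Hmap Hinj; rewrite -(size_iota 0 n1) -(size_iota 0 n2) -(size_map phi).
apply: uniq_leq_size.
  by rewrite map_inj_in_uniq ?iota_uniq // => x y; rewrite !mem_iota; apply: Hinj.
by move=> y /seq.mapP[x]; rewrite !mem_iota => /Hmap Hx ->.
Qed.

Lemma leq_of_surj_on n1 n2 (phi : nat -> nat) : (forall x, x < n1 -> phi x < n2) ->
  (forall y, y < n2 -> exists2 x, x < n1 & phi x = y) -> n2 <= n1.
Proof.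
move=> Hmap Hsurj; rewrite -(size_iota 0 n1) -(size_iota 0 n2) -(size_map phi (iota 0 n1)).
apply: uniq_leq_size (iota_uniq 0 n2) _ => y; rewrite mem_iota => /Hsurj[x Hx <-].
by apply: map_f; rewrite mem_iota.
Qed.

Section GraphIsomorphism.
Variables (E G : graph) (h : gmap).
Hypothesis h_iso : is_giso E G h.

Let hd a := head a (mE h a).

Lemma giso_single a : ovalid E a -> mE h a = [:: hd a].
Proof.
by case: h_iso => _ _ Hsize _ /Hsize; rewrite /hd; case: (mE h a) => [|b []].
Qed.

Lemma giso_orev a : ovalid E a -> mE h (orev a) = revp (mE h a).
Proof.
by case: h_iso => [[[_ _ Hrev] _] _ _ _]; case: a => x [] Ha; rewrite /orev /= Hrev ?revpK.
Qed.

Lemma mapP_giso s : all (ovalid E) s -> mapP h s = map hd s.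
Proof. by elim: s => //= a s IH /andP[Ha Hs]; rewrite mapP_cons giso_single // IH. Qed.

Lemma size_mapP_giso s : all (ovalid E) s -> size (mapP h s) = size s.
Proof. by move=> Hs; rewrite mapP_giso // size_map. Qed.

Lemma mapP_giso_inj s t : all (ovalid E) s -> all (ovalid E) t ->
  (mapP h s == mapP h t) = (s == t).
Proof.
move=> Hs Ht; apply/eqP/eqP => [|->] //; rewrite !mapP_giso //.
have [_ _ _ [_ Hinj _]] := h_iso.
elim: s t Hs Ht => [|a s IH] [|b t] //= /andP[Ha Hs] /andP[Hb Ht] [Eab Est].
by rewrite (Hinj a b Ha Hb Eab) (IH t Hs Ht Est).
Qed.

Lemma giso_nE_le : nE G <= nE E.
Proof.
have [_ _ _ [Hmap _ Hsurj]] := h_iso.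
apply: (@leq_of_surj_on _ _ (fun x => (hd (x, true)).1)) => [x Hx|y Hy].
  exact: (Hmap (x, true) Hx).
have [[x o] Ha Ea] := Hsurj (y, true) Hy; exists x => //.
case: o Ha Ea => Ha Ea; rewrite /hd; first by rewrite Ea.
by rewrite -[(x, true)]/(orev (x, false)) giso_orev // giso_single // /hd Ea.
Qed.

Lemma giso_nV_le : nV E <= nV G.
Proof. by have [_ [Hmap Hinj _] _ _] := h_iso; apply: (@leq_of_inj_on _ _ (mV h)). Qed.

End GraphIsomorphism.

Lemma mixing_surplusE G f :
  [set i : 'I_(nE G) | mixing f i || surplus G f i] = mixsur_set (nE G) (fun i => mE f (i, true)).
Proof. by apply/setP => i; rewrite !inE /surplus /mixing; case: ltnP. Qed.

Lemma sum_subn1 n (F : 'I_n -> nat) : (forall i, 0 < F i) ->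
  \sum_(i < n) (F i - 1) + n = \sum_(i < n) F i.
Proof.
move=> HF; rewrite -[n in _ + n]card_ord -sum1_card -big_split.
by apply: eq_bigr => i _ /=; rewrite subnK.
Qed.

Section Decomposition.
Variables (G : graph) (f : gmap) (ds : seq fold_spec) (h : gmap).
Hypothesis f_dec : fold_decomposition G f ds h.
Let E := chain_end G ds.
Let F := chain_map G ds.

Let chain_image_valid x : x < nE G -> all (ovalid E) (mE F (x, true)).
Proof. by have [Hc _ _] := f_dec; have [_ _ Hv _] := chain_edge_map Hc; apply: (Hv (x, true)). Qed.

Lemma decomposition_image x : x < nE G -> mE f (x, true) = mapP h (mE F (x, true)).
Proof. by have [_ _ [_ Hf]] := f_dec; apply: (Hf (x, true)). Qed.

Lemma decomposition_length : size ds + nE G <= \sum_(x < nE G) size (mE f (x : nat, true)).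
Proof.
have [Hc Hiso _] := f_dec.
have Hsize (x : 'I_(nE G)) : size (mE f (x : nat, true)) = size (mE F (x : nat, true)).
  by rewrite decomposition_image // (size_mapP_giso Hiso) ?chain_image_valid.
rewrite (eq_bigr _ (fun x _ => Hsize x)).
exact: chain_length_bound Hc (giso_nE_le Hiso).
Qed.

Lemma decomposition_mixsur : mixsur_set (nE G) (fun i => mE f (i, true)) =
  mixsur_set (nE G) (fun i => mE F (i, true)).
Proof.
have [_ Hiso _] := f_dec; have Hv (i : 'I_(nE G)) := chain_image_valid (ltn_ord i).
have Hrev (u : 'I_(nE G)) :
    mapP h (revp (mE F (u : nat, true))) = revp (mapP h (mE F (u : nat, true))).
  exact: mapP_revp (giso_orev Hiso) (Hv u).
apply/setP => i; rewrite !inE decomposition_image // (size_mapP_giso Hiso) //; congr orb.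
apply: eq_existsb => u; rewrite !decomposition_image // -Hrev.
by rewrite !(mapP_giso_inj Hiso) ?all_revp.
Qed.

(* The final graph has as many vertices and edges as G, so no complete fold
   is a bigon fold and complete folds are exactly as many as partial folds. *)
Lemma decomposition_weight : fold_count fold_weight G ds = size ds.
Proof.
have [Hc Hiso _] := f_dec; have [HV HE] := fold_count_sizes Hc.
have := giso_nE_le Hiso; have := giso_nV_le Hiso.
by rewrite fold_count_weight (size_fold_count G ds); lia.
Qed.

Lemma decomposition_mixsur_le : wf_graph G ->
  bij_on [pred v | v < nV G] [pred v | v < nV G] (mV f) ->
  #|mixsur_set (nE G) (fun i => mE f (i, true))| <= size ds.
Proof.
move=> Hwf [_ Hinj _]; have [Hc _ [HV _]] := f_dec; rewrite decomposition_mixsur.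
have no_mixsur : mixsur_set (nE G) (fun i => [:: (i, true)]) = set0.
  apply/setP => i; rewrite !inE /=; apply/existsP => -[u /andP[Nui]].
  by case/orP => /eqP [] /val_inj Eiu //; rewrite Eiu eqxx in Nui.
have end_lt (i : 'I_(nE G)) v : v \in [:: ini G i; ter G i] -> v < nV G.
  by case/andP: (Hwf i (ltn_ord i)) => Hi Ht; rewrite !inE => /orP[] /eqP ->.
have -> : mixsur_set (nE G) (fun i => mE F (i, true)) =
          mixsur_set (nE G) (fun i => mapP F [:: (i, true)]).
  by apply: eq_mixsur_set => i; rewrite mapP_seq1.
rewrite -decomposition_weight -[fold_count _ _ _]add0n -(cards0 'I_(nE G)) -no_mixsur.
apply: chain_mixsur_set Hc _ _ => [j|i j v w Hv Hw EF].
  by split=> //=; rewrite andbT; apply: ltn_ord.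
have Hv' := end_lt i v Hv; have Hw' := end_lt j w Hw.
by apply: Hinj; rewrite ?inE // !HV //= EF.
Qed.

End Decomposition.

Theorem lemma3p3 (G : graph) (f : gmap) (ds : seq fold_spec) (h : gmap) (m p : nat) :
  wf_graph G -> is_gmap G G f -> irreducible_map G f -> expanding G f ->
  homotopy_equiv G G f ->
  fold_decomposition G f ds h -> size ds = m ->
  num_stacks G f = p ->
  (m <= \sum_(x < nE G) (size (mE f (x : nat, true)) - 1)) /\
  (bij_on [pred v | v < nV G] [pred v | v < nV G] (mV f) -> p <= m).
Proof.
move=> Hwf Hf _ Hexp _ Hdec <- <-; split.
  have Hpos (x : 'I_(nE G)) : 0 < size (mE f (x : nat, true)).
    by case: Hf => _ Hnil; rewrite lt0n size_eq0 (Hnil (x : nat, true) (ltn_ord x)).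
  by have := decomposition_length Hdec; rewrite -(sum_subn1 Hpos) leq_add2r.
move=> Hbij; apply: leq_trans (num_stacks_le Hf Hexp) _.
by rewrite mixing_surplusE; apply: decomposition_mixsur_le Hdec Hwf Hbij.
Qed.
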